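(* For all integers $n,A\ge1$ and $D\ge0$, and every sufficiently large $K>1$, there exist $K_1\le K_2\le\dots\le K_{D+1}=K$ with $K_{j+1}\sim_{n,j}K_j^{A+1}$ (comparable up to multiplicative constants independent of $K$) such that, for every normalized polynomial $P$ of degree at most $D$ in $n$ real variables with real coefficients, there exist multiindices $\alpha_D<\alpha_{D-1}<\dots<\alpha_1$ with $|\alpha_j|=D-j$ such that $$\{x:|P(x)|<1/K_{D+1}\}\cap B(0,1)\subseteq\bigcup_{j=1}^D N_{1/K_j^A}\Big(Z_{\partial^{\alpha_j}P}\cap\{|\nabla\partial^{\alpha_j}P|\ge1/K_j\}\Big).$$
   Context: A polynomial is normalized if the $\ell^1$ sum of the absolute values of its coefficients equals $1$. $Z_Q=\{x\in\mathbb{R}^n:Q(x)=0\}$. $N_\sigma(E)$ is the $\sigma$-neighborhood of $E$. For multiindices, $\alpha<\beta$ means $\alpha\le\beta$ componentwise and $\alpha\ne\beta$; $\partial^\alpha$ is the corresponding partial derivative. *)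

From Stdlib Require Import Reals Lra Lia List Arith.
Import ListNotations.
Open Scope R_scope.

(* Points of R^n are functions nat -> R; only coordinates 0..n-1 matter. *)

Definition lsum {T : Type} (f : T -> R) (l : list T) : R :=
  fold_right (fun a acc => f a + acc) 0 l.

(* multiindices (lists of length n) of total degree <= D, each exactly once *)
Fixpoint mis (n D : nat) : list (list nat) :=
  match n with
  | O => [nil]
  | S m => flat_map (fun k => map (cons k) (mis m (D - k))) (seq 0 (S D))
  end.

Fixpoint mono (a : list nat) (x : nat -> R) : R :=
  match a with
  | nil => 1
  | k :: a' => x O ^ k * mono a' (fun i => x (S i))
  end.

Fixpoint falling (k m : nat) : nat :=
  match m with
  | O => 1%nat
  | S m' => (k * falling (k - 1) m')%nat
  end.

(* partial derivative d^b (x^a), evaluated at x *)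
Fixpoint dmono (b a : list nat) (x : nat -> R) : R :=
  match a with
  | nil => 1
  | k :: a' => let m := nth O b O in
      INR (falling k m) * x O ^ (k - m) * dmono (tl b) a' (fun i => x (S i))
  end.

(* A polynomial of degree <= D in n variables is given by its coefficients
   c a for a in mis n D (values of c elsewhere are irrelevant). *)
Definition poly_deriv (n D : nat) (c : list nat -> R) (b : list nat) (x : nat -> R) : R :=
  lsum (fun a => c a * dmono b a x) (mis n D).

Definition poly_eval (n D : nat) (c : list nat -> R) (x : nat -> R) : R :=
  lsum (fun a => c a * mono a x) (mis n D).

Definition normalized (n D : nat) (c : list nat -> R) : Prop :=
  lsum (fun a => Rabs (c a)) (mis n D) = 1.

Definition incr_mi (n : nat) (b : list nat) (i : nat) : list nat :=
  map (fun j => (nth j b O + (if Nat.eqb j i then 1 else 0))%nat) (seq 0 n).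

Definition grad_norm (n D : nat) (c : list nat -> R) (b : list nat) (x : nat -> R) : R :=
  sqrt (lsum (fun i => (poly_deriv n D c (incr_mi n b i) x) ^ 2) (seq 0 n)).

Definition norm_n (n : nat) (x : nat -> R) : R :=
  sqrt (lsum (fun i => (x i) ^ 2) (seq 0 n)).

Definition dist_n (n : nat) (x y : nat -> R) : R :=
  norm_n n (fun i => x i - y i).

Definition mi_le (a b : list nat) : Prop := Forall2 le a b.
Definition mi_lt (a b : list nat) : Prop := mi_le a b /\ a <> b.
Definition mi_abs (a : list nat) : nat := list_sum a.

Definition in_nbhd (n D : nat) (c : list nat -> R) (b : list nat) (Kj : R) (A : nat) (x : nat -> R) : Prop :=
  exists y : nat -> R,
    poly_deriv n D c b y = 0 /\
    grad_norm n D c b y >= 1 / Kj /\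
    dist_n n x y < 1 / Kj ^ A.

(* Choosing a multiindex
   a that maximizes |c_a| L^|a| for a suitable constant L, the derivative
   d^a P is bounded below by a constant lambda > 0 on the box |x_i| <= 2:
   d^a kills every other monomial of size <= |a|, and the coefficients of
   larger monomials are at most |c_a| / L ([key_lower]).  Join 0 to a by a
   chain 0 = beta_0 < beta_1 < ... of multiindices, each step adding a unit
   vector, and put alpha_j = beta_(D-j).  The scales are K_(j+1) = C K_j^(A+1)
   ([scales_exist]).  At a point x of the unit ball with |P(x)| < 1/K we
   descend along the chain ([descent]): if |d^(beta_k) P(x)| < 2/K_(j+1)
   with j = D - k, then either some first derivative of d^(beta_k) P is at
   least 2/K_j at x, and a one-variable zero finder along that coordinate
   ([zero_near]) produces a zero of d^(beta_k) P with gradient >= 1/K_j at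
   distance < 1/K_j^A, or all of them are below 2/K_j, in particular
   |d^(beta_(k+1)) P(x)| < 2/K_j ([descent_step]).  Reaching beta_|a| = a
   contradicts the lower bound lambda once all K_j >= 2/lambda. *)

From Stdlib Require Import Reals List Arith Lra Lia Classical.
From Coquelicot Require Import Coquelicot.
Open Scope R_scope.

Lemma lsum_ext {T} (l : list T) (f g : T -> R) :
  (forall a, In a l -> f a = g a) -> lsum f l = lsum g l.
Proof.
  induction l as [|b l IH]; intros H; simpl; [reflexivity|].
  rewrite (H b (in_eq b l)), IH; [reflexivity|].
  intros a Ha; apply H; now right.
Qed.

Lemma lsum_le {T} (l : list T) (f g : T -> R) :
  (forall a, In a l -> f a <= g a) -> lsum f l <= lsum g l.
Proof.
  induction l as [|b l IH]; intros H; simpl; [lra|].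
  apply Rplus_le_compat; [apply H, in_eq|].
  apply IH; intros a Ha; apply H; now right.
Qed.

Lemma lsum_abs {T} (l : list T) (f : T -> R) :
  Rabs (lsum f l) <= lsum (fun a => Rabs (f a)) l.
Proof.
  induction l as [|b l IH]; simpl; [rewrite Rabs_R0; lra|].
  eapply Rle_trans; [apply Rabs_triang|lra].
Qed.

Lemma lsum_mult_r {T} (l : list T) (f : T -> R) (k : R) :
  lsum (fun a => f a * k) l = lsum f l * k.
Proof. induction l as [|b l IH]; simpl; [ring|]. rewrite IH; ring. Qed.

Lemma lsum_nonneg {T} (l : list T) (f : T -> R) :
  (forall a, In a l -> 0 <= f a) -> 0 <= lsum f l.
Proof.
  induction l as [|b l IH]; intros H; simpl; [lra|].
  assert (0 <= f b) by apply H, in_eq.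
  assert (0 <= lsum f l) by (apply IH; intros a Ha; apply H; now right).
  lra.
Qed.

Lemma lsum_ge_term {T} (l : list T) (f : T -> R) (a : T) :
  (forall b, In b l -> 0 <= f b) -> In a l -> f a <= lsum f l.
Proof.
  induction l as [|b l IH]; intros Hpos Ha; [destruct Ha|]; simpl.
  assert (Hpos' : forall b', In b' l -> 0 <= f b') by (intros b' Hb'; apply Hpos; now right).
  destruct Ha as [<-|Ha].
  - pose proof (lsum_nonneg l f Hpos'); lra.
  - assert (0 <= f b) by apply Hpos, in_eq.
    pose proof (IH Hpos' Ha); lra.
Qed.

Lemma lsum_le_length {T} (l : list T) (f : T -> R) (B : R) :
  (forall a, In a l -> f a <= B) -> lsum f l <= INR (length l) * B.
Proof.
  induction l as [|b l IH]; intros H; simpl lsum; [simpl; lra|].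
  cbn [length]; rewrite S_INR.
  assert (f b <= B) by apply H, in_eq.
  assert (lsum f l <= INR (length l) * B) by (apply IH; intros a Ha; apply H; now right).
  lra.
Qed.

Lemma lsum_indicator (l : list nat) (i : nat) (v : R) :
  lsum (fun j => if Nat.eqb j i then v else 0) l = INR (count_occ Nat.eq_dec l i) * v.
Proof.
  induction l as [|j l IH]; simpl; [ring|]. rewrite IH.
  destruct (Nat.eqb_spec j i), (Nat.eq_dec j i); try contradiction; rewrite ?S_INR; ring.
Qed.

Lemma list_sum_indicator (l : list nat) (i : nat) :
  list_sum (map (fun j => if Nat.eqb j i then 1 else 0)%nat l) = count_occ Nat.eq_dec l i.
Proof.
  induction l as [|j l IH]; simpl; [reflexivity|]. rewrite IH.
  destruct (Nat.eqb_spec j i), (Nat.eq_dec j i); try contradiction; lia.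
Qed.

Lemma count_occ_seq (n i : nat) : (i < n)%nat -> count_occ Nat.eq_dec (seq 0 n) i = 1%nat.
Proof.
  intros Hi. apply (NoDup_count_occ' Nat.eq_dec); [apply seq_NoDup|].
  apply in_seq; lia.
Qed.

Lemma lsum_dominant {T} (eq_dec : forall x y : T, {x = y} + {x <> y})
    (l : list T) (f : T -> R) (a0 : T) (e : R) :
  0 <= e -> In a0 l -> (forall b, In b l -> b <> a0 -> Rabs (f b) <= e) ->
  Rabs (f a0) - INR (length l) * e <= Rabs (lsum f l).
Proof.
  intros He Ha0 Hsmall.
  assert (Hcopies : exists k, (In a0 l -> 1 <= k)%nat /\
            Rabs (lsum f l - INR k * f a0) <= INR (length l) * e).
  { clear Ha0. induction l as [|b l IH]; simpl lsum; cbn [length].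
    - exists 0%nat; split; [intros []|]. rewrite Rmult_0_l, Rminus_0_r, Rabs_R0; simpl; lra.
    - destruct IH as [k [Hk Hr]]; [intros b' Hb'; apply Hsmall; now right|].
      rewrite S_INR. destruct (eq_dec b a0) as [->|Hne].
      + exists (S k); split; [lia|]. rewrite S_INR.
        replace (f a0 + lsum f l - (INR k + 1) * f a0) with (lsum f l - INR k * f a0) by ring.
        lra.
      + exists k; split; [intros [E|E]; [congruence|auto]|].
        replace (f b + lsum f l - INR k * f a0) with (f b + (lsum f l - INR k * f a0)) by ring.
        eapply Rle_trans; [apply Rabs_triang|].
        pose proof (Hsmall b (in_eq b l) Hne); lra. }
  destruct Hcopies as [k [Hk Hr]]. specialize (Hk Ha0).
  assert (HkR : 1 <= INR k) by (apply (le_INR 1); exact Hk).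
  pose proof (Rabs_triang_inv (INR k * f a0) (INR k * f a0 - lsum f l)).
  rewrite Rabs_minus_sym in Hr.
  replace (INR k * f a0 - (INR k * f a0 - lsum f l)) with (lsum f l) in H by ring.
  rewrite Rabs_mult, (Rabs_pos_eq (INR k)) in H by apply pos_INR.
  pose proof (Rabs_pos (f a0)). nra.
Qed.

Lemma is_derive_lsum {T} (l : list T) (f g : T -> R -> R) :
  (forall a, In a l -> forall t, is_derive (f a) t (g a t)) ->
  forall t, is_derive (fun t => lsum (fun a => f a t) l) t (lsum (fun a => g a t) l).
Proof.
  induction l as [|a l IH]; intros H t; simpl.
  - apply (is_derive_const 0 t).
  - apply (is_derive_plus (f a) (fun t => lsum (fun b => f b t) l)).
    + apply H, in_eq.
    + apply IH; intros b Hb; apply H; now right.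
Qed.

Lemma falling_S (k m : nat) : falling k (S m) = (falling k m * (k - m))%nat.
Proof.
  revert k; induction m as [|m IH]; intros k; [simpl; lia|].
  change (falling k (S (S m))) with (k * falling (k - 1) (S m))%nat.
  rewrite IH; simpl falling.
  replace (k - 1 - m)%nat with (k - S m)%nat by lia. lia.
Qed.

Lemma falling_zero (k m : nat) : (k < m)%nat -> falling k m = 0%nat.
Proof.
  revert k; induction m as [|m IH]; intros k H; [lia|].
  simpl; destruct k; [lia|]. rewrite IH; lia.
Qed.

Lemma falling_diag (k : nat) : (1 <= falling k k)%nat.
Proof. induction k; simpl; [lia|]. rewrite Nat.sub_0_r. nia. Qed.

Lemma falling_le_pow (k m : nat) : (falling k m <= k ^ m)%nat.
Proof.
  revert k; induction m as [|m IH]; intros k; simpl; [lia|].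
  specialize (IH (k - 1)%nat).
  assert ((k - 1) ^ m <= k ^ m)%nat by (apply Nat.pow_le_mono_l; lia). nia.
Qed.

Lemma nth_tl (b : list nat) (j : nat) : nth j (tl b) 0%nat = nth (S j) b 0%nat.
Proof. destruct b; simpl; [destruct j|]; reflexivity. Qed.

Lemma dmono_ext_x (b a : list nat) (x y : nat -> R) :
  (forall j, x j = y j) -> dmono b a x = dmono b a y.
Proof.
  revert b x y; induction a as [|k a IH]; intros b x y H; simpl; [reflexivity|].
  rewrite H; f_equal. apply IH; intros; apply H.
Qed.

Lemma dmono_ext_b (b b' a : list nat) (x : nat -> R) :
  (forall j, (j < length a)%nat -> nth j b 0%nat = nth j b' 0%nat) ->
  dmono b a x = dmono b' a x.
Proof.
  revert b b' x; induction a as [|k a IH]; intros b b' x H; simpl; [reflexivity|].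
  rewrite (H 0%nat) by (simpl; lia). f_equal.
  apply IH; intros j Hj. rewrite !nth_tl. apply H; simpl; lia.
Qed.

Lemma dmono_zero (b a : list nat) (x : nat -> R) :
  (exists j, (j < length a)%nat /\ (nth j a 0 < nth j b 0)%nat) -> dmono b a x = 0.
Proof.
  revert b x; induction a as [|k a IH]; intros b x [j [Hj Hlt]]; simpl in *; [lia|].
  destruct j as [|j].
  - rewrite falling_zero by lia. simpl; ring.
  - rewrite (IH (tl b)); [ring|]. exists j; rewrite nth_tl; split; [lia|exact Hlt].
Qed.

Lemma dmono_order0 (b a : list nat) (x : nat -> R) :
  (forall j, nth j b 0%nat = 0%nat) -> dmono b a x = mono a x.
Proof.
  revert b x; induction a as [|k a IH]; intros b x H; simpl; [reflexivity|].
  rewrite H, Nat.sub_0_r, IH by (intros j; rewrite nth_tl; apply H). simpl; ring.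
Qed.

Lemma dmono_diag (a : list nat) (x : nat -> R) : 1 <= dmono a a x.
Proof.
  revert x; induction a as [|k a IH]; intros x; simpl; [lra|].
  rewrite Nat.sub_diag; simpl.
  assert (1 <= INR (falling k k)) by apply (le_INR 1), falling_diag.
  specialize (IH (fun i => x (S i))). nra.
Qed.

(* On the box |x_j| <= 2, every derivative of a monomial x^a with exponents
   at most D is bounded by (2(D+1))^|a| ([dmono_bound]). *)
Definition box_base (D : nat) : R := 2 * (INR D + 1).

Lemma box_base_ge1 (D : nat) : 1 <= box_base D.
Proof. unfold box_base; pose proof (pos_INR D); lra. Qed.

Lemma dmono_bound (D : nat) (b a : list nat) (x : nat -> R) :
  List.Forall (fun k => (k <= D)%nat) a ->
  (forall j, (j < length a)%nat -> Rabs (x j) <= 2) ->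
  Rabs (dmono b a x) <= box_base D ^ list_sum a.
Proof.
  revert b x; induction a as [|k a IH]; intros b x HF Hx; simpl; [rewrite Rabs_R1; lra|].
  inversion HF as [|? ? HkD HF']; subst.
  pose proof (box_base_ge1 D) as HR.
  rewrite pow_add, !Rabs_mult.
  apply Rmult_le_compat; try apply Rmult_le_pos; try apply Rabs_pos.
  2: { apply IH; [exact HF'|]. intros j Hj; apply Hx; simpl; lia. }
  set (m := nth 0 b 0%nat).
  destruct (le_lt_dec m k) as [Hm|Hm].
  2: { rewrite falling_zero by lia; simpl INR.
       rewrite Rabs_R0, Rmult_0_l; apply pow_le; lra. }
  assert (Hfall : Rabs (INR (falling k m)) <= (INR D + 1) ^ k).
  { rewrite Rabs_pos_eq by apply pos_INR.
    apply Rle_trans with (INR (k ^ m)); [apply le_INR, falling_le_pow|].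
    rewrite pow_INR. apply Rle_trans with ((INR D + 1) ^ m).
    - apply pow_incr; split; [apply pos_INR|]. apply le_INR in HkD; lra.
    - apply Rle_pow; [pose proof (pos_INR D); lra|exact Hm]. }
  assert (Hpow : Rabs (x 0%nat ^ (k - m)) <= 2 ^ k).
  { rewrite <- RPow_abs. apply Rle_trans with (2 ^ (k - m)).
    - apply pow_incr; split; [apply Rabs_pos|]. apply Hx; simpl; lia.
    - apply Rle_pow; [lra|lia]. }
  unfold box_base; rewrite Rpow_mult_distr, (Rmult_comm (2 ^ k)).
  apply Rmult_le_compat; auto; apply Rabs_pos.
Qed.

Definition shift (x : nat -> R) (i : nat) (t : R) : nat -> R :=
  fun j => if Nat.eqb j i then x j + t else x j.

Lemma dmono_deriv (a : list nat) : forall (b b' : list nat) (x : nat -> R) (i : nat),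
  (i < length a)%nat ->
  (forall j, (j < length a)%nat ->
     nth j b' 0%nat = (nth j b 0 + if Nat.eqb j i then 1 else 0)%nat) ->
  forall t, is_derive (fun t => dmono b a (shift x i t)) t (dmono b' a (shift x i t)).
Proof.
  induction a as [|k a IH]; intros b b' x i Hi Hb t; simpl in Hi; [lia|].
  simpl dmono.
  assert (Htl : forall j, (j < length a)%nat ->
     nth j (tl b') 0%nat = (nth j (tl b) 0 + if Nat.eqb (S j) i then 1 else 0)%nat).
  { intros j Hj. rewrite !nth_tl. apply Hb; simpl; lia. }
  destruct i as [|i].
  - set (m := nth 0 b 0%nat).
    assert (Hm : nth 0 b' 0%nat = S m) by (rewrite Hb by (simpl; lia); simpl; unfold m; lia).
    set (E := dmono (tl b) a (fun j => x (S j))).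
    assert (HE : dmono (tl b') a (fun j => shift x 0 t (S j)) = E).
    { unfold E. rewrite (dmono_ext_b (tl b') (tl b)).
      - apply dmono_ext_x; intros j; reflexivity.
      - intros j Hj. rewrite Htl by exact Hj. simpl; lia. }
    rewrite Hm, HE.
    apply (is_derive_ext (fun t => (INR (falling k m) * E) * (x 0%nat + t) ^ (k - m))).
    { intros s. unfold shift; simpl. fold m E. ring. }
    change (shift x 0 t 0%nat) with (x 0%nat + t).
    rewrite falling_S, mult_INR.
    replace (k - S m)%nat with (pred (k - m)) by lia.
    auto_derive; [exact I|ring].
  - assert (Hm : nth 0 b' 0%nat = nth 0 b 0%nat) by (rewrite Hb by (simpl; lia); simpl; lia).
    rewrite Hm.
    set (x' := fun j => x (S j)).
    apply (is_derive_ext (fun t => (INR (falling k (nth 0 b 0%nat)) * x 0%nat ^ (k - nth 0 b 0%nat))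
              * dmono (tl b) a (shift x' i t))).
    { intros s; reflexivity. }
    replace (dmono (tl b') a (fun j => shift x (S i) t (S j))) with (dmono (tl b') a (shift x' i t))
      by (apply dmono_ext_x; intros j; reflexivity).
    change (shift x (S i) t 0%nat) with (x 0%nat).
    apply is_derive_scal, IH; [lia|exact Htl].
Qed.

Lemma mis_spec (n D : nat) (a : list nat) :
  In a (mis n D) -> length a = n /\ (list_sum a <= D)%nat.
Proof.
  revert D a; induction n as [|n IH]; intros D a H.
  - destruct H as [<-|[]]; simpl; lia.
  - change (mis (S n) D) with
      (flat_map (fun k => map (cons k) (mis n (D - k))) (seq 0 (S D))) in H.
    apply in_flat_map in H. destruct H as [k [Hk Ha]].
    apply in_map_iff in Ha. destruct Ha as [a' [<- Ha']].
    apply IH in Ha'. apply in_seq in Hk. simpl; lia.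
Qed.

Lemma mis_zero (n D : nat) : In (repeat 0%nat n) (mis n D).
Proof.
  revert D; induction n as [|n IH]; intros D; [left; reflexivity|].
  change (mis (S n) D) with
    (flat_map (fun k => map (cons k) (mis n (D - k))) (seq 0 (S D))).
  apply in_flat_map. exists 0%nat. split; [apply in_seq; lia|].
  change (repeat 0%nat (S n)) with (0%nat :: repeat 0%nat n).
  apply in_map. rewrite Nat.sub_0_r. apply IH.
Qed.

Lemma entries_le_sum (a : list nat) (D : nat) :
  (list_sum a <= D)%nat -> List.Forall (fun k => (k <= D)%nat) a.
Proof.
  induction a as [|k a IH]; simpl; intros H; constructor; [lia|apply IH; lia].
Qed.

Lemma nth_map_seq (f : nat -> nat) (n j : nat) :
  (j < n)%nat -> nth j (map f (seq 0 n)) 0%nat = f j.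
Proof.
  intros Hj. rewrite (nth_indep _ 0%nat (f 0%nat)) by (rewrite length_map, length_seq; exact Hj).
  rewrite map_nth, seq_nth by exact Hj. reflexivity.
Qed.

Lemma nth_incr (n : nat) (b : list nat) (i j : nat) : (j < n)%nat ->
  nth j (incr_mi n b i) 0%nat = (nth j b 0 + if Nat.eqb j i then 1 else 0)%nat.
Proof. apply (nth_map_seq (fun j => nth j b 0 + if Nat.eqb j i then 1 else 0)%nat). Qed.

Lemma length_incr (n : nat) (b : list nat) (i : nat) : length (incr_mi n b i) = n.
Proof. unfold incr_mi. rewrite length_map, length_seq. reflexivity. Qed.

Lemma list_sum_map_plus (l : list nat) (f g : nat -> nat) :
  list_sum (map (fun j => f j + g j)%nat l) = (list_sum (map f l) + list_sum (map g l))%nat.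
Proof. induction l as [|j l IH]; simpl; [reflexivity|]. rewrite IH; lia. Qed.

Lemma map_nth_seq_id (b : list nat) : map (fun j => nth j b 0%nat) (seq 0 (length b)) = b.
Proof.
  apply (nth_ext _ _ 0%nat 0%nat); rewrite length_map, length_seq; [reflexivity|].
  intros j Hj. apply (nth_map_seq (fun j => nth j b 0%nat)), Hj.
Qed.

Lemma incr_sum (n : nat) (b : list nat) (i : nat) : (i < n)%nat -> length b = n ->
  list_sum (incr_mi n b i) = S (list_sum b).
Proof.
  intros Hi Hb. unfold incr_mi. rewrite list_sum_map_plus, list_sum_indicator, count_occ_seq by exact Hi.
  subst n. rewrite map_nth_seq_id. lia.
Qed.

Lemma positive_entry (a : list nat) : (1 <= list_sum a)%nat ->
  exists i, (i < length a)%nat /\ (1 <= nth i a 0)%nat.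
Proof.
  induction a as [|k a IH]; simpl; intros H; [lia|].
  destruct k as [|k]; [|exists 0%nat; simpl; lia].
  destruct IH as [i [H1 H2]]; [lia|]. exists (S i); simpl; split; [lia|exact H2].
Qed.

Lemma incr_surj (n m : nat) (a : list nat) : length a = n -> list_sum a = S m ->
  exists i a', (i < n)%nat /\ length a' = n /\ list_sum a' = m /\ incr_mi n a' i = a.
Proof.
  intros Hl Hs.
  assert (Hpos : exists i, (i < n)%nat /\ (1 <= nth i a 0)%nat)
    by (subst n; apply positive_entry; lia).
  destruct Hpos as [i [Hi Hai]].
  set (a' := map (fun j => nth j a 0 - if Nat.eqb j i then 1 else 0)%nat (seq 0 n)).
  assert (Hl' : length a' = n) by (unfold a'; rewrite length_map, length_seq; reflexivity).
  assert (Ha : incr_mi n a' i = a).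
  { apply (nth_ext _ _ 0%nat 0%nat); rewrite length_incr; [congruence|].
    intros j Hj. rewrite nth_incr by exact Hj. unfold a'.
    rewrite (nth_map_seq (fun j => nth j a 0 - if Nat.eqb j i then 1 else 0)%nat) by exact Hj.
    destruct (Nat.eqb_spec j i); [subst; lia|lia]. }
  exists i, a'. split; [exact Hi|split; [exact Hl'|split; [|exact Ha]]].
  rewrite <- Ha, incr_sum in Hs by assumption. lia.
Qed.

Fixpoint chain (n : nat) (s : nat -> nat) (k : nat) : list nat :=
  match k with O => repeat 0%nat n | S k' => incr_mi n (chain n s k') (s k') end.

Lemma length_chain (n : nat) (s : nat -> nat) (k : nat) : length (chain n s k) = n.
Proof. destruct k; simpl; [apply repeat_length|apply length_incr]. Qed.

Lemma chain_ext (n : nat) (s s' : nat -> nat) (k : nat) :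
  (forall k', (k' < k)%nat -> s k' = s' k') -> chain n s k = chain n s' k.
Proof. induction k as [|k IH]; intros H; simpl; [reflexivity|]. rewrite IH, H; auto. Qed.

Lemma list_sum_repeat0 (n : nat) : list_sum (repeat 0%nat n) = 0%nat.
Proof. induction n; simpl; auto. Qed.

Lemma chain_sum (n : nat) (s : nat -> nat) (k : nat) :
  (forall k, (s k < n)%nat) -> list_sum (chain n s k) = k.
Proof.
  intros Hs. induction k as [|k IH]; simpl; [apply list_sum_repeat0|].
  rewrite incr_sum, IH; [reflexivity|apply Hs|apply length_chain].
Qed.

Lemma Forall2_le_nth (l1 l2 : list nat) : length l1 = length l2 ->
  (forall j, (j < length l1)%nat -> (nth j l1 0 <= nth j l2 0)%nat) -> Forall2 le l1 l2.
Proof.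
  revert l2; induction l1 as [|k l1 IH]; intros l2 Hl H; destruct l2 as [|k' l2];
    simpl in *; try discriminate; constructor.
  - apply (H 0%nat); lia.
  - apply IH; [lia|]. intros j Hj; apply (H (S j)); lia.
Qed.

Lemma chain_lt (n : nat) (s : nat -> nat) (k : nat) :
  (forall k, (s k < n)%nat) -> mi_lt (chain n s k) (chain n s (S k)).
Proof.
  intros Hs. split.
  - apply Forall2_le_nth; rewrite !length_chain; [reflexivity|].
    intros j Hj. simpl. rewrite nth_incr by exact Hj. lia.
  - intros E. pose proof (f_equal list_sum E) as Hsum.
    rewrite !chain_sum in Hsum by exact Hs. lia.
Qed.

Lemma chain_reaches (n : nat) : (1 <= n)%nat -> forall m a, length a = n -> list_sum a = m ->
  exists s, (forall k, (s k < n)%nat) /\ chain n s m = a.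
Proof.
  intros Hn. induction m as [|m IH]; intros a Hl Hs.
  - exists (fun _ => 0%nat). split; [lia|]. simpl. subst n.
    clear -Hs. induction a as [|k a IHa]; simpl in *; [reflexivity|].
    f_equal; [lia|apply IHa; lia].
  - destruct (incr_surj n m a Hl Hs) as [i [a' [Hi [Hl' [Hs' Ha]]]]].
    destruct (IH a' Hl' Hs') as [s' [Hs'n Hchain]].
    exists (fun k => if Nat.eqb k m then i else s' k). split.
    + intros k. destruct (Nat.eqb k m); auto.
    + simpl. rewrite Nat.eqb_refl, <- Ha, <- Hchain. f_equal.
      apply chain_ext. intros k Hk. destruct (Nat.eqb_spec k m); [lia|reflexivity].
Qed.

Lemma exists_smaller (a' a : list nat) : length a' = length a ->
  (list_sum a' <= list_sum a)%nat -> a' <> a ->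
  exists j, (j < length a')%nat /\ (nth j a' 0 < nth j a 0)%nat.
Proof.
  revert a; induction a' as [|x a' IH]; intros a Hl Hs Hne;
    destruct a as [|y a]; simpl in *; try discriminate; [congruence|].
  destruct (lt_dec x y) as [Hxy|Hxy]; [exists 0%nat; split; [lia|exact Hxy]|].
  destruct (list_eq_dec Nat.eq_dec a' a) as [->|E].
  - assert (x = y) by lia. congruence.
  - destruct (IH a) as [j [Hj1 Hj2]]; try lia; auto. exists (S j); split; [lia|exact Hj2].
Qed.

Lemma poly_deriv_ext_x (n D : nat) (c : list nat -> R) (b : list nat) (x y : nat -> R) :
  (forall j, x j = y j) -> poly_deriv n D c b x = poly_deriv n D c b y.
Proof.
  intros H. apply lsum_ext. intros a _. f_equal. apply dmono_ext_x, H.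
Qed.

Lemma poly_deriv_order0 (n D : nat) (c : list nat -> R) (x : nat -> R) :
  poly_deriv n D c (repeat 0%nat n) x = poly_eval n D c x.
Proof.
  apply lsum_ext. intros a _. f_equal. apply dmono_order0. intros j. apply nth_repeat.
Qed.

Lemma poly_deriv_shift (n D : nat) (c : list nat -> R) (b : list nat) (x : nat -> R) (i : nat) :
  (i < n)%nat -> forall t, is_derive (fun t => poly_deriv n D c b (shift x i t)) t
                                     (poly_deriv n D c (incr_mi n b i) (shift x i t)).
Proof.
  intros Hi. apply (is_derive_lsum (mis n D) (fun a t => c a * dmono b a (shift x i t))).
  intros a Ha t. destruct (mis_spec _ _ _ Ha) as [Hl _].
  apply is_derive_scal, dmono_deriv; [lia|].
  intros j Hj. apply nth_incr. lia.
Qed.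

(* Uniform bound for all derivatives of a normalized P on the box |x_j| <= 2. *)
Definition deriv_bound (D : nat) : R := box_base D ^ D.

Lemma deriv_bound_ge1 (D : nat) : 1 <= deriv_bound D.
Proof. apply pow_R1_Rle, box_base_ge1. Qed.

Lemma dmono_bound_deg (D : nat) (b a : list nat) (x : nat -> R) :
  (list_sum a <= D)%nat -> (forall j, (j < length a)%nat -> Rabs (x j) <= 2) ->
  Rabs (dmono b a x) <= deriv_bound D.
Proof.
  intros Ha Hx. eapply Rle_trans; [apply dmono_bound; [apply entries_le_sum, Ha|exact Hx]|].
  apply Rle_pow; [apply box_base_ge1|exact Ha].
Qed.

Lemma poly_bound (n D : nat) (c : list nat -> R) (b : list nat) (y : nat -> R) :
  normalized n D c -> (forall j, (j < n)%nat -> Rabs (y j) <= 2) ->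
  Rabs (poly_deriv n D c b y) <= deriv_bound D.
Proof.
  intros Hn Hy. eapply Rle_trans; [apply lsum_abs|].
  eapply Rle_trans; [apply (lsum_le _ _ (fun a => Rabs (c a) * deriv_bound D))|].
  - intros a Ha. destruct (mis_spec _ _ _ Ha) as [Hl Hs].
    rewrite Rabs_mult. apply Rmult_le_compat_l; [apply Rabs_pos|].
    apply dmono_bound_deg; [exact Hs|]. intros j Hj; apply Hy; lia.
  - rewrite lsum_mult_r, Hn. lra.
Qed.

(* Lower bound. The multiindex a maximizing |c_a| L^|a| dominates d^a P:
   coefficients of size <= |a| other than a are killed by d^a, and larger
   ones are at most |c_a|/L. *)
Definition n_terms (n D : nat) : R := INR (length (mis n D)).
Definition dom_base (n D : nat) : R := 2 * n_terms n D * deriv_bound D + 1.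
Definition lower_const (n D : nat) : R := 1 / (2 * n_terms n D * dom_base n D ^ D).

Lemma n_terms_ge1 (n D : nat) : 1 <= n_terms n D.
Proof.
  unfold n_terms. pose proof (mis_zero n D) as H.
  destruct (mis n D) as [|a l]; [destruct H|].
  cbn [length]; rewrite S_INR. pose proof (pos_INR (length l)); lra.
Qed.

Lemma dom_base_ge1 (n D : nat) : 1 <= dom_base n D.
Proof.
  unfold dom_base. pose proof (n_terms_ge1 n D). pose proof (deriv_bound_ge1 D). nra.
Qed.

Lemma lower_const_pos (n D : nat) : 0 < lower_const n D.
Proof.
  unfold lower_const. pose proof (n_terms_ge1 n D).
  pose proof (pow_R1_Rle _ D (dom_base_ge1 n D)).
  apply Rdiv_lt_0_compat; nra.
Qed.

Lemma argmax {T} (l : list T) (f : T -> R) (d : T) : In d l ->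
  exists a, In a l /\ forall b, In b l -> f b <= f a.
Proof.
  revert d; induction l as [|x l IH]; intros d Hd; [destruct Hd|].
  destruct l as [|y l'].
  - exists x. split; [left; reflexivity|]. intros b [<-|[]]; lra.
  - destruct (IH y (in_eq y l')) as [a [Ha Hb]].
    destruct (Rle_dec (f x) (f a)).
    + exists a. split; [now right|]. intros b [<-|Hb']; auto.
    + exists x. split; [now left|]. intros b [<-|Hb']; [lra|]. specialize (Hb b Hb'). lra.
Qed.

Lemma dominant_index (n D : nat) (c : list nat -> R) (L : R) : 1 <= L -> normalized n D c ->
  exists a, In a (mis n D) /\ 1 <= n_terms n D * (Rabs (c a) * L ^ D) /\
    forall b, In b (mis n D) -> Rabs (c b) * L ^ list_sum b <= Rabs (c a) * L ^ list_sum a.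
Proof.
  intros HL Hnorm.
  destruct (argmax (mis n D) (fun a => Rabs (c a) * L ^ list_sum a) _ (mis_zero n D))
    as [a [Ha Hmax]].
  exists a. split; [exact Ha|split; [|exact Hmax]].
  rewrite <- Hnorm. apply lsum_le_length. intros b Hb.
  specialize (Hmax b Hb); simpl in Hmax.
  assert (1 <= L ^ list_sum b) by (apply pow_R1_Rle; lra).
  assert (L ^ list_sum a <= L ^ D) by (apply Rle_pow; [lra|apply (mis_spec _ _ _ Ha)]).
  pose proof (Rabs_pos (c b)). pose proof (Rabs_pos (c a)). nra.
Qed.

(* Every term c_b d^a(x^b), b <> a, is at most |c_a| F / L on the box:
   it vanishes if |b| <= |a|, and |c_b| <= |c_a|/L if |b| > |a|. *)
Lemma off_terms_small (n D : nat) (c : list nat -> R) (L : R) (a b : list nat) (x : nat -> R) :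
  1 <= L -> In a (mis n D) -> In b (mis n D) -> b <> a ->
  Rabs (c b) * L ^ list_sum b <= Rabs (c a) * L ^ list_sum a ->
  (forall j, (j < n)%nat -> Rabs (x j) <= 2) ->
  Rabs (c b * dmono a b x) <= Rabs (c a) * deriv_bound D / L.
Proof.
  intros HL Ha Hb Hne Hmax Hx.
  destruct (mis_spec _ _ _ Ha) as [Hla Hsa], (mis_spec _ _ _ Hb) as [Hlb Hsb].
  assert (Hca : 0 <= Rabs (c a) * deriv_bound D / L).
  { pose proof (Rabs_pos (c a)). pose proof (deriv_bound_ge1 D).
    apply Rmult_le_pos; [nra|left; apply Rinv_0_lt_compat; lra]. }
  destruct (le_lt_dec (list_sum b) (list_sum a)) as [Hle|Hlt].
  - rewrite dmono_zero, Rmult_0_r, Rabs_R0; [exact Hca|].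
    apply exists_smaller; [congruence|exact Hle|exact Hne].
  - rewrite Rabs_mult.
    assert (Hd : Rabs (dmono a b x) <= deriv_bound D)
      by (apply dmono_bound_deg; [exact Hsb|intros j Hj; apply Hx; lia]).
    assert (HLa : 0 < L ^ list_sum a) by (apply pow_lt; lra).
    assert (Hp : L ^ list_sum a * L <= L ^ list_sum b)
      by (rewrite Rmult_comm, tech_pow_Rmult; apply Rle_pow; [lra|lia]).
    assert (Hcb : Rabs (c b) * L <= Rabs (c a)).
    { apply (Rmult_le_reg_r (L ^ list_sum a)); [exact HLa|].
      pose proof (Rabs_pos (c b)). nra. }
    apply (Rmult_le_reg_r L); [lra|]. unfold Rdiv.
    replace (Rabs (c a) * deriv_bound D * / L * L) with (Rabs (c a) * deriv_bound D)
      by (field; lra).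
    replace (Rabs (c b) * Rabs (dmono a b x) * L) with (Rabs (c b) * L * Rabs (dmono a b x))
      by ring.
    apply Rmult_le_compat; [|apply Rabs_pos|exact Hcb|exact Hd].
    pose proof (Rabs_pos (c b)). nra.
Qed.

Lemma key_lower (n D : nat) (c : list nat -> R) : normalized n D c ->
  exists a, In a (mis n D) /\ forall x, (forall j, (j < n)%nat -> Rabs (x j) <= 2) ->
    lower_const n D <= Rabs (poly_deriv n D c a x).
Proof.
  intros Hnorm.
  set (L := dom_base n D). set (N := n_terms n D). set (F := deriv_bound D).
  assert (HL : 1 <= L) by apply dom_base_ge1.
  assert (HN : 1 <= N) by apply n_terms_ge1.
  assert (HF : 1 <= F) by apply deriv_bound_ge1.
  destruct (dominant_index n D c L HL Hnorm) as [a [Ha [Hca Hmax]]].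
  exists a. split; [exact Ha|]. intros x Hx.
  set (ca := Rabs (c a)).
  assert (Hca0 : 0 <= ca) by apply Rabs_pos.
  assert (Hprincipal : ca <= Rabs (c a * dmono a a x)).
  { rewrite Rabs_mult, (Rabs_pos_eq (dmono a a x)) by (pose proof (dmono_diag a x); lra).
    pose proof (dmono_diag a x). fold ca. nra. }
  assert (He : 0 <= ca * F / L) by (apply Rmult_le_pos; [nra|left; apply Rinv_0_lt_compat; lra]).
  pose proof (lsum_dominant (list_eq_dec Nat.eq_dec) (mis n D) (fun b => c b * dmono a b x)
                a (ca * F / L) He Ha
                (fun b Hb Hne => off_terms_small n D c L a b x HL Ha Hb Hne (Hmax b Hb) Hx)) as Hsum.
  cbv beta in Hsum. change (INR (length (mis n D))) with N in Hsum.
  assert (HNe : N * (ca * F / L) <= ca / 2).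
  { assert (HNF : N * F / L <= / 2).
    { apply (Rmult_le_reg_r L); [lra|].
      replace (N * F / L * L) with (N * F) by (field; lra).
      unfold L, dom_base; fold N F; lra. }
    replace (N * (ca * F / L)) with (ca * (N * F / L)) by (field; lra).
    unfold Rdiv at 2. apply Rmult_le_compat_l; [exact Hca0|exact HNF]. }
  assert (Hlow : lower_const n D <= ca / 2).
  { unfold lower_const; fold N L.
    assert (1 <= L ^ D) by (apply pow_R1_Rle; lra).
    apply (Rmult_le_reg_r (2 * N * L ^ D)); [nra|].
    replace (1 / (2 * N * L ^ D) * (2 * N * L ^ D)) with 1 by (field; nra).
    replace (ca / 2 * (2 * N * L ^ D)) with (N * (ca * L ^ D)) by field. exact Hca. }
  unfold poly_deriv. lra.
Qed.

Lemma continuous_of_derive (g g1 : R -> R) :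
  (forall t, is_derive g t (g1 t)) -> forall t, continuity_pt g t.
Proof.
  intros H t. apply derivable_continuous_pt. exists (g1 t). apply is_derive_Reals, H.
Qed.

Lemma mvt_abs (g g1 : R -> R) (M a b : R) : (forall t, is_derive g t (g1 t)) ->
  (forall t, Rmin a b <= t <= Rmax a b -> Rabs (g1 t) <= M) ->
  Rabs (g b - g a) <= M * Rabs (b - a).
Proof.
  intros Hd Hb. destruct (MVT_gen g a b g1) as [t [Ht ->]].
  - intros; apply Hd.
  - intros; apply (continuous_of_derive g g1 Hd).
  - rewrite Rabs_mult. apply Rmult_le_compat_r; [apply Rabs_pos|]. apply Hb; lra.
Qed.

Lemma mvt_lower (g g1 : R -> R) (mu a b : R) : (forall t, is_derive g t (g1 t)) -> a <= b ->
  (forall t, a <= t <= b -> mu <= g1 t) -> mu * (b - a) <= g b - g a.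
Proof.
  intros Hd Hab Hb. destruct (MVT_gen g a b g1) as [t [Ht ->]].
  - intros; apply Hd.
  - intros; apply (continuous_of_derive g g1 Hd).
  - rewrite Rmin_left, Rmax_right in Ht by exact Hab.
    apply Rmult_le_compat_r; [lra|]. apply Hb; lra.
Qed.

Lemma increasing_zero (g g1 : R -> R) (mu h : R) : (forall t, is_derive g t (g1 t)) ->
  0 < h -> (forall t, - h <= t <= h -> mu <= g1 t) -> Rabs (g 0) < mu * h ->
  exists t, - h <= t <= h /\ g t = 0.
Proof.
  intros Hd Hh Hg1 Hg0. apply Rabs_def2 in Hg0.
  pose proof (mvt_lower g g1 mu 0 h Hd ltac:(lra) ltac:(intros; apply Hg1; lra)).
  pose proof (mvt_lower g g1 mu (- h) 0 Hd ltac:(lra) ltac:(intros; apply Hg1; lra)).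
  destruct (IVT g (- h) h (continuous_of_derive g g1 Hd)) as [t [Ht Hgt]]; [lra|lra|lra|].
  exists t; split; [exact Ht|exact Hgt].
Qed.

Lemma zero_near_pos (g g1 g2 : R -> R) (M mu h : R) :
  (forall t, is_derive g t (g1 t)) -> (forall t, is_derive g1 t (g2 t)) ->
  (forall t, Rabs t <= 1 -> Rabs (g2 t) <= M) ->
  0 < mu -> 0 < h -> h <= 1 -> h * M <= mu ->
  Rabs (g 0) < mu * h -> 2 * mu <= g1 0 ->
  exists t, Rabs t <= h /\ g t = 0 /\ mu <= Rabs (g1 t).
Proof.
  intros Hd1 Hd2 HM Hmu Hh Hh1 HhM Hg0 Hg10.
  assert (Hg1 : forall t, - h <= t <= h -> mu <= g1 t).
  { intros t Ht.
    assert (Hvar : Rabs (g1 t - g1 0) <= M * Rabs (t - 0)).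
    { apply (mvt_abs g1 g2); [exact Hd2|]. intros u Hu. apply HM.
      unfold Rmin, Rmax in Hu. destruct (Rle_dec 0 t); apply Rabs_le; lra. }
    rewrite Rminus_0_r in Hvar.
    assert (M * Rabs t <= mu).
    { assert (0 <= M) by (pose proof (HM 0 ltac:(rewrite Rabs_R0; lra)); pose proof (Rabs_pos (g2 0)); lra).
      assert (Rabs t <= h) by (apply Rabs_le; lra). nra. }
    apply Rabs_le_between in Hvar. lra. }
  destruct (increasing_zero g g1 mu h Hd1 Hh Hg1 Hg0) as [t [Ht Hgt]].
  exists t. split; [apply Rabs_le; lra|split; [exact Hgt|]].
  pose proof (Hg1 t Ht). rewrite Rabs_pos_eq; lra.
Qed.

Lemma zero_near (g g1 g2 : R -> R) (M mu h : R) :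
  (forall t, is_derive g t (g1 t)) -> (forall t, is_derive g1 t (g2 t)) ->
  (forall t, Rabs t <= 1 -> Rabs (g2 t) <= M) ->
  0 < mu -> 0 < h -> h <= 1 -> h * M <= mu ->
  Rabs (g 0) < mu * h -> 2 * mu <= Rabs (g1 0) ->
  exists t, Rabs t <= h /\ g t = 0 /\ mu <= Rabs (g1 t).
Proof.
  intros Hd1 Hd2 HM Hmu Hh Hh1 HhM Hg0 Hg10.
  destruct (Rle_dec 0 (g1 0)) as [Hpos|Hneg].
  - rewrite Rabs_pos_eq in Hg10 by exact Hpos. eapply zero_near_pos; eauto.
  - assert (Hopp : forall f f' : R -> R, (forall t, is_derive f t (f' t)) ->
               forall t, is_derive (fun t => - f t) t (- f' t)).
    { intros f f' Hf t. apply (is_derive_opp f), Hf. }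
    destruct (zero_near_pos (fun t => - g t) (fun t => - g1 t) (fun t => - g2 t) M mu h)
      as [t [Ht [Hgt Hg1t]]]; auto.
    + intros t Ht. rewrite Rabs_Ropp. auto.
    + rewrite Rabs_Ropp. exact Hg0.
    + rewrite Rabs_left in Hg10; lra.
    + exists t. rewrite Rabs_Ropp in Hg1t. repeat split; [exact Ht|lra|exact Hg1t].
Qed.

Lemma sqrt_sq_abs (v : R) : sqrt (v ^ 2) = Rabs v.
Proof. rewrite <- sqrt_Rsqr_abs. f_equal. unfold Rsqr. ring. Qed.

Lemma abs_le_sqrt_sum (f : nat -> R) (l : list nat) (i : nat) :
  In i l -> Rabs (f i) <= sqrt (lsum (fun j => f j ^ 2) l).
Proof.
  intros Hi. rewrite <- sqrt_sq_abs. apply sqrt_le_1_alt.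
  apply (lsum_ge_term l (fun j => f j ^ 2)); [intros; apply pow2_ge_0|exact Hi].
Qed.

Lemma coord_le_norm (n : nat) (x : nat -> R) (j : nat) : (j < n)%nat -> Rabs (x j) <= norm_n n x.
Proof. intros Hj. apply abs_le_sqrt_sum, in_seq. lia. Qed.

Lemma partial_le_grad (n D : nat) (c : list nat -> R) (b : list nat) (y : nat -> R) (i : nat) :
  (i < n)%nat -> Rabs (poly_deriv n D c (incr_mi n b i) y) <= grad_norm n D c b y.
Proof.
  intros Hi. apply (abs_le_sqrt_sum (fun i => poly_deriv n D c (incr_mi n b i) y)), in_seq. lia.
Qed.

Lemma dist_shift (n : nat) (x : nat -> R) (i : nat) (t : R) :
  (i < n)%nat -> dist_n n x (shift x i t) = Rabs t.
Proof.
  intros Hi. unfold dist_n, norm_n.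
  rewrite (lsum_ext _ _ (fun j => if Nat.eqb j i then t ^ 2 else 0)).
  - rewrite lsum_indicator, count_occ_seq by exact Hi. rewrite Rmult_1_l. apply sqrt_sq_abs.
  - intros j _. unfold shift. destruct (Nat.eqb j i); ring.
Qed.

Lemma shift_0 (x : nat -> R) (i j : nat) : shift x i 0 j = x j.
Proof. unfold shift. destruct (Nat.eqb j i); ring. Qed.

Lemma shift_in_box (n : nat) (x : nat -> R) (i : nat) (t : R) :
  Rabs t <= 1 -> (forall j, (j < n)%nat -> Rabs (x j) <= 1) ->
  forall j, (j < n)%nat -> Rabs (shift x i t j) <= 2.
Proof.
  intros Ht Hx j Hj. specialize (Hx j Hj). unfold shift.
  destruct (Nat.eqb j i); [pose proof (Rabs_triang (x j) t)|]; lra.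
Qed.

Definition root (A : nat) (y : R) : R := Rpower y (/ INR (A + 1)).

Lemma INR_succ_pos (A : nat) : 0 < INR (A + 1).
Proof. rewrite plus_INR. simpl. pose proof (pos_INR A). lra. Qed.

Lemma root_pos (A : nat) (y : R) : 0 < root A y.
Proof. apply exp_pos. Qed.

Lemma root_pow (A : nat) (y : R) : 0 < y -> root A y ^ (A + 1) = y.
Proof.
  intros Hy. rewrite <- Rpower_pow by apply root_pos. unfold root.
  rewrite Rpower_mult, Rinv_l by (pose proof (INR_succ_pos A); lra).
  apply Rpower_1, Hy.
Qed.

Lemma root_of_pow (A : nat) (z : R) : 0 < z -> root A (z ^ (A + 1)) = z.
Proof.
  intros Hz. unfold root. rewrite <- Rpower_pow by exact Hz.
  rewrite Rpower_mult, Rinv_r by (pose proof (INR_succ_pos A); lra).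
  apply Rpower_1, Hz.
Qed.

Lemma root_le (A : nat) (y z : R) : 0 < y <= z -> root A y <= root A z.
Proof.
  intros H. apply Rle_Rpower_l; [|exact H].
  left. apply Rinv_0_lt_compat, INR_succ_pos.
Qed.

Fixpoint scale_up (C0 G : R) (A m : nat) : R :=
  match m with O => G | S m => C0 * scale_up C0 G A m ^ (A + 1) end.

Fixpoint scale_down (C0 K : R) (A m : nat) : R :=
  match m with O => K | S m => root A (scale_down C0 K A m / C0) end.

Lemma le_pow_self (X : R) (k : nat) : 1 <= X -> (1 <= k)%nat -> X <= X ^ k.
Proof. intros HX Hk. rewrite <- (pow_1 X) at 1. apply Rle_pow; [exact HX|exact Hk]. Qed.

Lemma scale_up_ge (C0 G : R) (A m : nat) : 1 <= C0 -> 1 <= G -> G <= scale_up C0 G A m.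
Proof.
  intros HC HG. induction m as [|m IH]; simpl; [lra|].
  pose proof (le_pow_self (scale_up C0 G A m) (A + 1) ltac:(lra) ltac:(lia)). nra.
Qed.

Lemma scale_down_ge (C0 G K : R) (A D : nat) : 1 <= C0 -> 1 <= G -> scale_up C0 G A D <= K ->
  forall m, (m <= D)%nat -> scale_up C0 G A (D - m) <= scale_down C0 K A m.
Proof.
  intros HC HG HK. induction m as [|m IH]; intros Hm; [rewrite Nat.sub_0_r; exact HK|].
  specialize (IH ltac:(lia)). simpl scale_down.
  replace (D - m)%nat with (S (D - S m)) in IH by lia. simpl scale_up in IH.
  set (T := scale_up C0 G A (D - S m)) in *.
  assert (HT : 1 <= T) by (pose proof (scale_up_ge C0 G A (D - S m) HC HG); unfold T; lra).
  rewrite <- (root_of_pow A T) by lra. apply root_le. split; [apply pow_lt; lra|].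
  apply (Rmult_le_reg_l C0); [lra|].
  replace (C0 * (scale_down C0 K A m / C0)) with (scale_down C0 K A m) by (field; lra).
  exact IH.
Qed.

Lemma scales_exist (C0 G : R) (A D : nat) (K : R) :
  1 <= C0 -> 1 <= G -> scale_up C0 G A D <= K ->
  exists Ks : nat -> R, Ks (S D) = K /\
    (forall j, (1 <= j)%nat -> (j <= S D)%nat -> G <= Ks j) /\
    (forall j, (1 <= j)%nat -> (j <= D)%nat -> Ks (S j) = C0 * Ks j ^ (A + 1)).
Proof.
  intros HC HG HK. exists (fun j => scale_down C0 K A (S D - j)).
  split; [rewrite Nat.sub_diag; reflexivity|].
  assert (Hge : forall j, (1 <= j)%nat -> (j <= S D)%nat -> G <= scale_down C0 K A (S D - j)).
  { intros j Hj1 Hj2.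
    pose proof (scale_down_ge C0 G K A D HC HG HK (S D - j) ltac:(lia)).
    pose proof (scale_up_ge C0 G A (D - (S D - j)) HC HG). lra. }
  split; [exact Hge|]. intros j Hj1 Hj2.
  pose proof (Hge (S j) ltac:(lia) ltac:(lia)) as HGj.
  replace (S D - S j)%nat with (D - j)%nat in * by lia.
  replace (S D - j)%nat with (S (D - j)) by lia. simpl scale_down.
  rewrite root_pow; [field; lra|]. apply Rdiv_lt_0_compat; lra.
Qed.

Lemma scales_comparable (C0 X Y : R) (A : nat) : 1 <= C0 -> 1 <= X ->
  Y = C0 * X ^ (A + 1) -> (0 < X /\ X <= Y) /\ (X ^ (A + 1) / C0 <= Y /\ Y <= C0 * X ^ (A + 1)).
Proof.
  intros HC HX ->. pose proof (le_pow_self X (A + 1) HX ltac:(lia)).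
  split; [split; nra|split; [|lra]].
  apply (Rmult_le_reg_r C0); [lra|].
  replace (X ^ (A + 1) / C0 * C0) with (X ^ (A + 1)) by (field; lra).
  assert (1 <= C0 * C0) by nra. nra.
Qed.

(* With X = K_j and K_(j+1) = C0 X^(A+1), the step h = 2 / (C0 X^A) meets the
   requirements of [zero_near] for mu = 1/X and is below 1/X^A. *)
Lemma step_sizes (X C0 F : R) (A : nat) : 1 <= X -> 0 <= F -> 2 * F <= C0 -> 2 < C0 ->
  (1 <= A)%nat ->
  0 < 2 / (C0 * X ^ A) /\ 2 / (C0 * X ^ A) <= 1 /\ 2 / (C0 * X ^ A) * F <= 1 / X /\
  2 / (C0 * X ^ A) < 1 / X ^ A /\ 1 / X * (2 / (C0 * X ^ A)) = 2 / (C0 * X ^ (A + 1)).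
Proof.
  intros HX HF HC2F HC2 HA.
  pose proof (le_pow_self X A HX HA) as HP.
  assert (HCP : 0 < C0 * X ^ A) by nra.
  split; [apply Rdiv_lt_0_compat; lra|]. split.
  { apply (Rmult_le_reg_r (C0 * X ^ A)); [exact HCP|].
    replace (2 / (C0 * X ^ A) * (C0 * X ^ A)) with 2 by (field; lra). nra. }
  split.
  { apply (Rmult_le_reg_r (C0 * X ^ A * X)); [nra|].
    replace (2 / (C0 * X ^ A) * F * (C0 * X ^ A * X)) with (2 * F * X) by (field; lra).
    replace (1 / X * (C0 * X ^ A * X)) with (C0 * X ^ A) by (field; lra). nra. }
  split.
  { apply (Rmult_lt_reg_r (C0 * X ^ A)); [exact HCP|].
    replace (2 / (C0 * X ^ A) * (C0 * X ^ A)) with 2 by (field; lra).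
    replace (1 / X ^ A * (C0 * X ^ A)) with C0 by (field; lra). exact HC2. }
  rewrite pow_add, pow_1. field. lra.
Qed.

Lemma descent_step (n D A : nat) (c : list nat -> R) (b : list nat) (x : nat -> R) (X C0 : R) :
  (1 <= A)%nat -> normalized n D c -> 1 <= X -> 2 * deriv_bound D <= C0 -> 2 < C0 ->
  (forall j, (j < n)%nat -> Rabs (x j) <= 1) ->
  Rabs (poly_deriv n D c b x) < 2 / (C0 * X ^ (A + 1)) ->
  in_nbhd n D c b X A x \/
  forall i, (i < n)%nat -> Rabs (poly_deriv n D c (incr_mi n b i) x) < 2 / X.
Proof.
  intros HA Hc HX HC2F HC2 Hx Hsmall.
  destruct (classic (exists i, (i < n)%nat /\ 2 / X <= Rabs (poly_deriv n D c (incr_mi n b i) x)))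
    as [[i [Hi Hlarge]]|Hnone].
  - left. pose proof (deriv_bound_ge1 D) as HF.
    destruct (step_sizes X C0 (deriv_bound D) A HX ltac:(lra) HC2F HC2 HA)
      as [Hh0 [Hh1 [HhF [HhA Hmuh]]]].
    assert (Hat0 : forall b', poly_deriv n D c b' (shift x i 0) = poly_deriv n D c b' x)
      by (intros b'; apply poly_deriv_ext_x, shift_0).
    destruct (zero_near (fun t => poly_deriv n D c b (shift x i t))
                (fun t => poly_deriv n D c (incr_mi n b i) (shift x i t))
                (fun t => poly_deriv n D c (incr_mi n (incr_mi n b i) i) (shift x i t))
                (deriv_bound D) (1 / X) (2 / (C0 * X ^ A)))
      as [t [Ht [Hzero Hgrad]]].
    + apply poly_deriv_shift, Hi.
    + apply poly_deriv_shift, Hi.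
    + intros t Ht. apply poly_bound; [exact Hc|]. apply shift_in_box; assumption.
    + apply Rdiv_lt_0_compat; lra.
    + exact Hh0.
    + exact Hh1.
    + exact HhF.
    + rewrite Hmuh, Hat0. exact Hsmall.
    + rewrite Hat0. lra.
    + exists (shift x i t). split; [exact Hzero|split].
      * apply Rle_ge, (Rle_trans _ _ _ Hgrad), partial_le_grad, Hi.
      * rewrite dist_shift by exact Hi. lra.
  - right. intros i Hi. apply Rnot_le_lt. intros Hle. apply Hnone. exists i; split; assumption.
Qed.

Lemma descent (n D A : nat) (c : list nat -> R) (Ks : nat -> R) (C0 : R) (s : nat -> nat)
    (x : nat -> R) :
  (1 <= A)%nat -> normalized n D c -> 2 * deriv_bound D <= C0 -> 2 < C0 ->
  (forall k, (s k < n)%nat) ->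
  (forall j, (1 <= j)%nat -> (j <= D)%nat -> 1 <= Ks j /\ Ks (S j) = C0 * Ks j ^ (A + 1)) ->
  (forall j, (j < n)%nat -> Rabs (x j) <= 1) ->
  Rabs (poly_eval n D c x) < 2 / Ks (S D) ->
  forall k, (k <= D)%nat ->
    (exists j, (1 <= j)%nat /\ (j <= D)%nat /\ in_nbhd n D c (chain n s (D - j)) (Ks j) A x) \/
    Rabs (poly_deriv n D c (chain n s k) x) < 2 / Ks (S (D - k)).
Proof.
  intros HA Hc HC2F HC2 Hs HKs Hx Heval. induction k as [|k IH]; intros Hk.
  - right. rewrite Nat.sub_0_r. simpl chain. rewrite poly_deriv_order0. exact Heval.
  - destruct (IH ltac:(lia)) as [Hdone|Hsmall]; [left; exact Hdone|].
    destruct (HKs (D - k)%nat ltac:(lia) ltac:(lia)) as [HKj Hrec].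
    rewrite Hrec in Hsmall.
    destruct (descent_step n D A c (chain n s k) x (Ks (D - k)%nat) C0 HA Hc HKj HC2F HC2 Hx Hsmall)
      as [Hnb|Hpartials].
    + left. exists (D - k)%nat. split; [lia|split; [lia|]].
      replace (D - (D - k))%nat with k by lia. exact Hnb.
    + right. replace (S (D - S k)) with (D - k)%nat by lia. apply Hpartials, Hs.
Qed.

Lemma inv_scale_below (lam K : R) : 0 < lam -> 2 / lam <= K -> 2 / K <= lam.
Proof.
  intros Hlam HK. assert (0 < K) by (pose proof (Rdiv_lt_0_compat 2 lam ltac:(lra) Hlam); lra).
  apply (Rmult_le_reg_r (K / lam)); [apply Rdiv_lt_0_compat; lra|].
  replace (2 / K * (K / lam)) with (2 / lam) by (field; lra).
  replace (lam * (K / lam)) with K by (field; lra). exact HK.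
Qed.

Lemma covering_for_scales (n A D : nat) (C0 K : R) (Ks : nat -> R) :
  (1 <= n)%nat -> (1 <= A)%nat -> 2 * deriv_bound D <= C0 -> 2 < C0 -> Ks (S D) = K ->
  (forall j, (1 <= j)%nat -> (j <= S D)%nat -> Rmax 1 (2 / lower_const n D) <= Ks j) ->
  (forall j, (1 <= j)%nat -> (j <= D)%nat -> Ks (S j) = C0 * Ks j ^ (A + 1)) ->
  forall c : list nat -> R, normalized n D c ->
  exists alpha : nat -> list nat,
    (forall j, (1 <= j)%nat -> (j <= D)%nat ->
        length (alpha j) = n /\ mi_abs (alpha j) = (D - j)%nat) /\
    (forall j, (1 <= j)%nat -> (j < D)%nat -> mi_lt (alpha (S j)) (alpha j)) /\
    forall x : nat -> R,
      Rabs (poly_eval n D c x) < 1 / K -> norm_n n x < 1 ->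
      exists j, (1 <= j)%nat /\ (j <= D)%nat /\ in_nbhd n D c (alpha j) (Ks j) A x.
Proof.
  intros Hn HA HC2F HC2 HKsD HKsG HKsrec c Hc.
  pose proof (lower_const_pos n D) as Hlam.
  assert (HKs1 : forall j, (1 <= j)%nat -> (j <= S D)%nat -> 1 <= Ks j /\ 2 / lower_const n D <= Ks j)
    by (intros j Hj1 Hj2; pose proof (HKsG j Hj1 Hj2); pose proof (Rmax_l 1 (2 / lower_const n D));
        pose proof (Rmax_r 1 (2 / lower_const n D)); lra).
  destruct (key_lower n D c Hc) as [a [Ha Hlow]].
  destruct (mis_spec n D a Ha) as [Hla Hsa].
  destruct (chain_reaches n Hn (list_sum a) a Hla eq_refl) as [s [Hs Hend]].
  exists (fun j => chain n s (D - j)). split; [|split].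
  - intros j _ _. split; [apply length_chain|apply chain_sum, Hs].
  - intros j Hj1 Hj2. replace (D - j)%nat with (S (D - S j)) by lia. apply chain_lt, Hs.
  - intros x Hx Hnorm.
    assert (Hbox : forall j, (j < n)%nat -> Rabs (x j) <= 1)
      by (intros j Hj; pose proof (coord_le_norm n x j Hj); lra).
    assert (Hrec : forall j, (1 <= j)%nat -> (j <= D)%nat ->
                   1 <= Ks j /\ Ks (S j) = C0 * Ks j ^ (A + 1))
      by (intros j Hj1 Hj2; split; [apply HKs1; lia|apply HKsrec; assumption]).
    assert (Heval : Rabs (poly_eval n D c x) < 2 / Ks (S D)).
    { destruct (HKs1 (S D) ltac:(lia) ltac:(lia)) as [HK _]. rewrite HKsD in *.
      apply (Rlt_le_trans _ _ _ Hx). unfold Rdiv.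
      apply Rmult_le_compat_r; [left; apply Rinv_0_lt_compat; lra|lra]. }
    destruct (descent n D A c Ks C0 s x HA Hc HC2F HC2 Hs Hrec Hbox Heval (list_sum a) Hsa)
      as [Hnb|Hsmall]; [exact Hnb|exfalso].
    rewrite Hend in Hsmall.
    assert (Hlow_x : lower_const n D <= Rabs (poly_deriv n D c a x))
      by (apply Hlow; intros j Hj; pose proof (Hbox j Hj); lra).
    destruct (HKs1 (S (D - list_sum a)) ltac:(lia) ltac:(lia)) as [_ HK].
    pose proof (inv_scale_below (lower_const n D) _ Hlam HK).
    lra.
Qed.

Theorem mainTheorem7 :
  forall (n A D : nat), (1 <= n)%nat -> (1 <= A)%nat ->
  exists C : R, 1 <= C /\
  exists K0 : R, forall K : R, K > 1 -> K >= K0 ->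
  exists Ks : nat -> R,
    Ks (S D) = K /\
    (forall j, (1 <= j)%nat -> (j <= D)%nat -> 0 < Ks j /\ Ks j <= Ks (S j)) /\
    (forall j, (1 <= j)%nat -> (j <= D)%nat ->
        Ks j ^ (A + 1) / C <= Ks (S j) /\ Ks (S j) <= C * Ks j ^ (A + 1)) /\
    forall c : list nat -> R, normalized n D c ->
    exists alpha : nat -> list nat,
      (forall j, (1 <= j)%nat -> (j <= D)%nat ->
          length (alpha j) = n /\ mi_abs (alpha j) = (D - j)%nat) /\
      (forall j, (1 <= j)%nat -> (j < D)%nat -> mi_lt (alpha (S j)) (alpha j)) /\
      forall x : nat -> R,
        Rabs (poly_eval n D c x) < 1 / K -> norm_n n x < 1 ->
        exists j, (1 <= j)%nat /\ (j <= D)%nat /\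
          in_nbhd n D c (alpha j) (Ks j) A x.
Proof.
  intros n A D Hn HA.
  pose proof (deriv_bound_ge1 D) as HF.
  set (C0 := 2 * deriv_bound D + 3).
  set (G := Rmax 1 (2 / lower_const n D)).
  assert (HG : 1 <= G) by apply Rmax_l.
  exists C0. split; [unfold C0; lra|].
  exists (scale_up C0 G A D). intros K _ HK.
  destruct (scales_exist C0 G A D K ltac:(unfold C0; lra) HG ltac:(lra))
    as [Ks [HKsD [HKsG HKsrec]]].
  assert (Hcmp : forall j, (1 <= j)%nat -> (j <= D)%nat ->
             (0 < Ks j /\ Ks j <= Ks (S j)) /\
             (Ks j ^ (A + 1) / C0 <= Ks (S j) /\ Ks (S j) <= C0 * Ks j ^ (A + 1))).
  { intros j Hj1 Hj2. apply scales_comparable; [unfold C0; lra| |apply HKsrec; assumption].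
    pose proof (HKsG j Hj1 ltac:(lia)); lra. }
  exists Ks. split; [exact HKsD|]. split; [intros j Hj1 Hj2; apply Hcmp; assumption|].
  split; [intros j Hj1 Hj2; apply Hcmp; assumption|].
  apply (covering_for_scales n A D C0 K Ks Hn HA ltac:(unfold C0; lra) ltac:(unfold C0; lra)
           HKsD HKsG HKsrec).
Qed.
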